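(* Let $L\ge1$ be an integer. For Lebesgue-almost every $c\in\mathbb{C}^L$, the family of $L^2$ matrices $$\big\{(\pi(k,n)c)(\pi(k,n)c)^*\big\}_{(k,n)\in\mathbb{Z}_L\times\mathbb{Z}_L}\subseteq\mathbb{C}^{L\times L}$$ is linearly independent; that is, the diagonal pattern $\Lambda_{\mathrm{diag}}=\{((k,n),(k,n)):(k,n)\in\mathbb{Z}_L^2\}$ is permissible for almost every $c$.
   Context: On $\mathbb{C}^L$ (indices mod $L$): $T^kc[p]=c[p-k]$, $M^nc[p]=e^{2\pi inp/L}c[p]$, $\pi(k,n)=M^nT^k$. A set $\Lambda\subseteq(\mathbb{Z}_L^2)^2$ is a permissible pattern (for $c$) if the matrices $\{\pi(\lambda)c\,(\pi(\lambda')c)^*\}_{(\lambda,\lambda')\in\Lambda}$ are linearly independent. *)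

From Stdlib Require Import Reals.
Open Scope R_scope.

Definition C : Type := (R * R)%type.
Definition C0 : C := (0, 0).
Definition Cadd (z w : C) : C := (fst z + fst w, snd z + snd w).
Definition Cmul (z w : C) : C :=
  (fst z * fst w - snd z * snd w, fst z * snd w + snd z * fst w).
Definition Cconj (z : C) : C := (fst z, - snd z).
Definition Cexpi (t : R) : C := (cos t, sin t).

Fixpoint Csum (n : nat) (f : nat -> C) : C :=
  match n with
  | O => C0
  | S m => Cadd (Csum m f) (f m)
  end.

(** Vectors in C^L are functions nat -> C, only the entries 0..L-1 matter;
    indices are taken mod L. *)
Definition cvec := nat -> C.

(** (T^k c)[p] = c[p - k mod L] *)
Definition Tshift (L k : nat) (c : cvec) : cvec :=
  fun p => c (((p mod L) + L - (k mod L)) mod L)%nat.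

Definition Mmod (L n : nat) (c : cvec) : cvec :=
  fun p => Cmul (Cexpi (2 * PI * INR n * INR p / INR L)) (c p).

Definition tfshift (L k n : nat) (c : cvec) : cvec := Mmod L n (Tshift L k c).

Definition diag_permissible (L : nat) (c : cvec) : Prop :=
  forall a : nat -> nat -> C,
    (forall p q : nat, (p < L)%nat -> (q < L)%nat ->
       Csum L (fun k => Csum L (fun n =>
         Cmul (a k n) (Cmul (tfshift L k n c p) (Cconj (tfshift L k n c q)))))
       = C0) ->
    forall k n : nat, (k < L)%nat -> (n < L)%nat -> a k n = C0.

Fixpoint Rsum_n (n : nat) (f : nat -> R) : R :=
  match n with O => 0 | S m => Rsum_n m f + f m end.
Fixpoint Rprod_n (n : nat) (f : nat -> R) : R :=
  match n with O => 1 | S m => Rprod_n m f * f m end.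

Definition lebesgue_null (d : nat) (N : (nat -> R) -> Prop) : Prop :=
  forall eps : R, 0 < eps ->
    exists lo hi : nat -> nat -> R,
      (forall j i, (i < d)%nat -> lo j i <= hi j i) /\
      (forall m, Rsum_n m (fun j => Rprod_n d (fun i => hi j i - lo j i)) <= eps) /\
      (forall x, N x -> exists j, forall i, (i < d)%nat -> lo j i <= x i <= hi j i).

(** Identification R^{2L} = C^L : c[p] = x(2p) + i x(2p+1). *)
Definition vec_of_real (x : nat -> R) : cvec := fun p => (x (2 * p)%nat, x (2 * p + 1)%nat).

From Pilot Require Import Defs.
From Stdlib Require Import Reals Lra Lia Psatz Arith List Cantor.
From Stdlib Require Import Classical ClassicalEpsilon FunctionalExtensionality.
Open Scope R_scope.

(** If [c] is not diag-permissible, some nonzero coefficients [a k n] annihilate every entry of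
    the pattern matrix. Summing its [m]-th cyclic off-diagonal against [omega^(-eta q)] gives the
    ambiguity function [A_c(m, eta)] times the 2D DFT of [a]; as the DFT is invertible, [c] must be
    a zero of some [A_c(m, eta)]. Each such zero set is Lebesgue-null in [R^(2L)]: as a function
    of the real coordinate [x 0], [Re A_c(0, eta)] is a monic quadratic, while for [m > 0]
    [A_c(m, eta)] is affine with a slope that is itself affine, with nonzero slope, in one more
    coordinate. Where the leading coefficient stays away from [0], such a zero set is the graph of
    a locally Lipschitz function of the other coordinates, and grids of cubes cover these graphs by
    boxes of arbitrarily small total volume. *)

Ltac Cring :=
  repeat match goal with z : Defs.C |- _ => destruct z end;
  unfold Cadd, Cmul, Cconj, C0 in *; simpl in *; try (f_equal; ring).

Definition Cscale (t : R) (z : Defs.C) : Defs.C := (t * fst z, t * snd z).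

Lemma Cadd_0_l z : Cadd C0 z = z. Proof. Cring. Qed.
Lemma Cadd_0_r z : Cadd z C0 = z. Proof. Cring. Qed.
Lemma Cmul_0_l z : Cmul C0 z = C0. Proof. Cring. Qed.
Lemma Cmul_0_r z : Cmul z C0 = C0. Proof. Cring. Qed.
Lemma Cconj_0 : Cconj C0 = C0. Proof. Cring. Qed.
Lemma Cconj_mul z w : Cconj (Cmul z w) = Cmul (Cconj z) (Cconj w). Proof. Cring. Qed.

Lemma Cmul_integral z w : Cmul z w = C0 -> z = C0 \/ w = C0.
Proof.
  destruct z as [a b], w as [c e]; unfold Cmul, C0; simpl; intros H.
  injection H as H1 H2.
  destruct (Req_dec (a * a + b * b) 0) as [Hz | Hz].
  - left; assert (a = 0) by nra; assert (b = 0) by nra; subst; auto.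
  - right.
    assert (Hc : (a * a + b * b) * c = 0).
    { replace ((a * a + b * b) * c) with (a * (a * c - b * e) + b * (a * e + b * c)) by ring.
      rewrite H1, H2; ring. }
    assert (He : (a * a + b * b) * e = 0).
    { replace ((a * a + b * b) * e) with (a * (a * e + b * c) - b * (a * c - b * e)) by ring.
      rewrite H1, H2; ring. }
    apply Rmult_integral in Hc; apply Rmult_integral in He.
    destruct Hc, He; try lra; subst; auto.
Qed.

Lemma Csum_ext n F G : (forall j, (j < n)%nat -> F j = G j) -> Csum n F = Csum n G.
Proof.
  induction n; intros H; simpl; auto.
  rewrite IHn, H by (intros; try apply H; lia); auto.
Qed.

Lemma Csum_eq_0 n F : (forall j, (j < n)%nat -> F j = C0) -> Csum n F = C0.
Proof.
  induction n; intros H; simpl; auto.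
  rewrite IHn, H by (intros; try apply H; lia); Cring.
Qed.

Lemma Csum_add n F G : Csum n (fun j => Cadd (F j) (G j)) = Cadd (Csum n F) (Csum n G).
Proof.
  induction n; simpl; [Cring|].
  rewrite IHn; generalize (Csum n F) (Csum n G) (F n) (G n); intros; Cring.
Qed.

Lemma Csum_mul_l z n F : Cmul z (Csum n F) = Csum n (fun j => Cmul z (F j)).
Proof.
  induction n; simpl; [Cring|].
  rewrite <- IHn; generalize (Csum n F) (F n); intros; Cring.
Qed.

Lemma Csum_mul_r z n F : Cmul (Csum n F) z = Csum n (fun j => Cmul (F j) z).
Proof.
  induction n; simpl; [Cring|].
  rewrite <- IHn; generalize (Csum n F) (F n); intros; Cring.
Qed.

Lemma Csum_scale t n F : Cscale t (Csum n F) = Csum n (fun j => Cscale t (F j)).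
Proof.
  unfold Cscale; induction n; simpl; [Cring|].
  rewrite <- IHn; generalize (Csum n F) (F n); intros; Cring.
Qed.

Lemma Csum_comm n m F :
  Csum n (fun i => Csum m (fun j => F i j)) = Csum m (fun j => Csum n (fun i => F i j)).
Proof.
  induction n; simpl.
  - rewrite Csum_eq_0; auto.
  - rewrite IHn, <- Csum_add; auto.
Qed.

Lemma Csum_single n F j0 :
  (j0 < n)%nat -> (forall j, (j < n)%nat -> j <> j0 -> F j = C0) -> Csum n F = F j0.
Proof.
  induction n; intros Hj H; simpl; [lia|].
  destruct (Nat.eq_dec j0 n) as [-> | Hne].
  - rewrite Csum_eq_0; [apply Cadd_0_l | intros; apply H; lia].
  - rewrite H, Cadd_0_r by lia; apply IHn; [lia | intros; apply H; lia].
Qed.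

Lemma Csum_const n z : Csum n (fun _ => z) = Cscale (INR n) z.
Proof.
  unfold Cscale; induction n; simpl; [Cring|].
  rewrite IHn; destruct n; simpl; Cring.
Qed.

Lemma Csum_shift n F : Cadd (Csum n (fun q => F (S q))) (F O) = Cadd (Csum n F) (F n).
Proof.
  induction n; simpl; [Cring|].
  rewrite <- IHn; generalize (Csum n (fun q => F (S q))) (F O) (F (S n)) (F n); intros; Cring.
Qed.

Lemma Csum_periodic L h k :
  (forall q, h (q + L)%nat = h q) -> Csum L (fun q => h (q + k)%nat) = Csum L h.
Proof.
  intros Hp; induction k.
  - apply Csum_ext; intros; f_equal; lia.
  - rewrite <- IHk.
    pose proof (Csum_shift L (fun q => h (q + k)%nat)) as E; simpl in E.
    replace (h (L + k)%nat) with (h k) in E by (rewrite <- (Hp k); f_equal; lia).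
    replace (Csum L (fun q => h (q + S k)%nat)) with (Csum L (fun q => h (S (q + k))))
      by (apply Csum_ext; intros; f_equal; lia).
    revert E; generalize (Csum L (fun q => h (S (q + k)))) (Csum L (fun q => h (q + k)%nat)) (h k).
    intros; Cring; injection E; intros; f_equal; lra.
Qed.

Definition omega (L : nat) (t : R) : Defs.C := Cexpi (2 * PI * t / INR L).

Lemma omega_add L a b : Cmul (omega L a) (omega L b) = omega L (a + b).
Proof.
  unfold omega, Cexpi, Cmul; simpl.
  replace (2 * PI * (a + b) / INR L) with (2 * PI * a / INR L + 2 * PI * b / INR L)
    by (unfold Rdiv; ring).
  rewrite cos_plus, sin_plus; f_equal; ring.
Qed.

Lemma omega_conj L t : Cconj (omega L t) = omega L (- t).
Proof.
  unfold omega, Cexpi, Cconj; simpl.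
  replace (2 * PI * - t / INR L) with (- (2 * PI * t / INR L)) by (unfold Rdiv; ring).
  rewrite cos_neg, sin_neg; auto.
Qed.

Lemma omega_0 L : omega L 0 = (1, 0).
Proof.
  unfold omega, Cexpi; replace (2 * PI * 0 / INR L) with 0 by (unfold Rdiv; ring).
  rewrite cos_0, sin_0; auto.
Qed.

Lemma omega_period L t k : (L <> 0)%nat -> omega L (t + INR L * INR k) = omega L t.
Proof.
  intros HL; unfold omega, Cexpi; assert (INR L <> 0) by (apply not_0_INR; auto).
  replace (2 * PI * (t + INR L * INR k) / INR L) with (2 * PI * t / INR L + 2 * INR k * PI)
    by (field; auto).
  rewrite cos_period, sin_period; auto.
Qed.

Lemma omega_mul_mod L n a : (L <> 0)%nat ->
  omega L (INR n * INR (a mod L)) = omega L (INR n * INR a).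
Proof.
  intros HL.
  replace (INR n * INR a) with (INR n * INR (a mod L) + INR L * INR (n * (a / L))).
  - symmetry; apply omega_period; auto.
  - rewrite (Nat.div_mod_eq a L) at 3; rewrite plus_INR, !mult_INR; ring.
Qed.

Lemma omega_neq_1_pos L t : 0 < t < INR L -> omega L t <> (1, 0).
Proof.
  intros Ht E; unfold omega, Cexpi in E; injection E as Hc _.
  set (a := PI * t / INR L).
  assert (Ha : 0 < a < PI).
  { pose proof PI_RGT_0; unfold a; split.
    - apply Rdiv_lt_0_compat; nra.
    - apply Rmult_lt_reg_r with (INR L); [lra|].
      unfold Rdiv; rewrite Rmult_assoc, Rinv_l; nra. }
  replace (2 * PI * t / INR L) with (2 * a) in Hc by (unfold a, Rdiv; ring).
  rewrite cos_2a_sin in Hc; pose proof (sin_gt_0 a (proj1 Ha) (proj2 Ha)); nra.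
Qed.

Lemma omega_neq_1 L n n0 : (n < L)%nat -> (n0 < L)%nat -> n <> n0 ->
  omega L (INR n - INR n0) <> (1, 0).
Proof.
  intros Hn Hn0 Hne; apply lt_INR in Hn; apply lt_INR in Hn0.
  pose proof (pos_INR n); pose proof (pos_INR n0).
  destruct (lt_dec n0 n) as [Hlt | Hlt].
  { apply omega_neq_1_pos; apply lt_INR in Hlt; lra. }
  intros E; assert (Hlt' : INR n < INR n0) by (apply lt_INR; lia).
  apply (omega_neq_1_pos L (INR n0 - INR n)); [lra|].
  replace (INR n0 - INR n) with (- (INR n - INR n0)) by ring.
  rewrite <- omega_conj, E; Cring.
Qed.

Lemma omega_multiple L k : (L <> 0)%nat -> omega L (INR L * INR k) = (1, 0).
Proof. intros HL; rewrite <- (Rplus_0_l (INR L * INR k)), omega_period, omega_0; auto. Qed.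

Definition omega_sum (L : nat) (r : R) : Defs.C := Csum L (fun m => omega L (r * INR m)).

Lemma omega_sum_0 L : omega_sum L 0 = (INR L, 0).
Proof.
  unfold omega_sum; rewrite (Csum_ext L _ (fun _ => (1, 0))), Csum_const.
  - unfold Cscale; simpl; f_equal; ring.
  - intros; rewrite Rmult_0_l; apply omega_0.
Qed.

Lemma omega_sum_orth L n n0 : (n < L)%nat -> (n0 < L)%nat -> n <> n0 ->
  omega_sum L (INR n - INR n0) = C0.
Proof.
  intros Hn Hn0 Hne; assert (HL : (L <> 0)%nat) by lia.
  set (r := INR n - INR n0); set (z := omega L r).
  assert (Hz1 : omega L (r * INR L) = (1, 0)).
  { replace (r * INR L) with (INR L * INR n + - (INR L * INR n0)) by (unfold r; ring).
    rewrite <- omega_add, <- omega_conj, !omega_multiple by auto; Cring. }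
  pose proof (Csum_shift L (fun m => omega L (r * INR m))) as E; cbv beta in E.
  change (INR 0) with 0 in E; rewrite Rmult_0_r, omega_0, Hz1 in E.
  rewrite (Csum_ext L _ (fun q => Cmul z (omega L (r * INR q)))), <- Csum_mul_l in E
    by (intros; unfold z; rewrite omega_add, S_INR; f_equal; ring).
  fold (omega_sum L r) in E.
  assert (Hprod : Cmul (Cadd z (-1, 0)) (omega_sum L r) = C0).
  { revert E; generalize z (omega_sum L r); intros; Cring; injection E; intros; f_equal; lra. }
  destruct (Cmul_integral _ _ Hprod) as [Hz | Hz]; auto.
  exfalso; apply (omega_neq_1 L n n0); auto; fold r; fold z.
  revert Hz; generalize z; intros; Cring; injection Hz; intros; f_equal; lra.
Qed.

(** * Reduction to zeros of the ambiguity function *)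

Definition ambiguity (L m xi : nat) (c c' : cvec) : Defs.C :=
  Csum L (fun j => Cmul (Cmul (c ((j + m) mod L)%nat) (Cconj (c' j))) (omega L (- (INR xi * INR j)))).

Definition dft2 (L : nat) (a : nat -> nat -> Defs.C) (m eta : nat) : Defs.C :=
  Csum L (fun k => Csum L (fun n =>
    Cmul (a k n) (Cmul (omega L (INR n * INR m)) (omega L (- (INR eta * INR k)))))).

Definition pattern_entry (L : nat) (c : cvec) (a : nat -> nat -> Defs.C) (p q : nat) : Defs.C :=
  Csum L (fun k => Csum L (fun n =>
    Cmul (a k n) (Cmul (tfshift L k n c p) (Cconj (tfshift L k n c q))))).

Lemma tfshift_eq L k n c p :
  tfshift L k n c p = Cmul (omega L (INR n * INR p)) (c ((p mod L + L - k mod L) mod L)%nat).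
Proof. unfold tfshift, Mmod, Tshift, omega; do 3 f_equal; unfold Rdiv; ring. Qed.

Lemma mod_add_L L a : ((a + L) mod L = a mod L)%nat.
Proof. replace (a + L)%nat with (a + 1 * L)%nat by lia; apply Nat.Div0.mod_add. Qed.

Section Reduction.

Variable L : nat.
Hypothesis HL : (1 <= L)%nat.
Let HL0 : (L <> 0)%nat. Proof. lia. Qed.

Lemma dft2_inversion_sum a k0 n0 :
  Csum L (fun m => Csum L (fun eta =>
    Cmul (Cmul (omega L (- (INR n0 * INR m))) (omega L (INR eta * INR k0))) (dft2 L a m eta)))
  = Csum L (fun k => Csum L (fun n =>
    Cmul (a k n) (Cmul (omega_sum L (INR n - INR n0)) (omega_sum L (INR k0 - INR k))))).
Proof.
  unfold dft2.
  rewrite (Csum_ext L _ (fun m => Csum L (fun k => Csum L (fun eta => Csum L (fun n =>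
     Cmul (Cmul (omega L (- (INR n0 * INR m))) (omega L (INR eta * INR k0)))
      (Cmul (a k n) (Cmul (omega L (INR n * INR m)) (omega L (- (INR eta * INR k)))))))))).
  2:{ intros; rewrite <- Csum_comm; apply Csum_ext; intros.
      rewrite Csum_mul_l; apply Csum_ext; intros; apply Csum_mul_l. }
  rewrite Csum_comm; apply Csum_ext; intros k _.
  rewrite (Csum_ext L _ (fun m => Csum L (fun n => Csum L (fun eta =>
     Cmul (Cmul (omega L (- (INR n0 * INR m))) (omega L (INR eta * INR k0)))
      (Cmul (a k n) (Cmul (omega L (INR n * INR m)) (omega L (- (INR eta * INR k))))))))).
  2:{ intros; apply Csum_comm. }
  rewrite Csum_comm; apply Csum_ext; intros n _.
  unfold omega_sum; rewrite Csum_mul_r, Csum_mul_l; apply Csum_ext; intros m _.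
  rewrite !Csum_mul_l; apply Csum_ext; intros eta _.
  replace (omega L ((INR n - INR n0) * INR m))
    with (Cmul (omega L (INR n * INR m)) (omega L (- (INR n0 * INR m))))
    by (rewrite omega_add; f_equal; ring).
  replace (omega L ((INR k0 - INR k) * INR eta))
    with (Cmul (omega L (INR eta * INR k0)) (omega L (- (INR eta * INR k))))
    by (rewrite omega_add; f_equal; ring).
  generalize (omega L (INR n * INR m)) (omega L (- (INR n0 * INR m)))
    (omega L (INR eta * INR k0)) (omega L (- (INR eta * INR k))) (a k n).
  intros; Cring.
Qed.

Lemma dft2_eq_0 a : (forall m eta, (m < L)%nat -> (eta < L)%nat -> dft2 L a m eta = C0) ->
  forall k0 n0, (k0 < L)%nat -> (n0 < L)%nat -> a k0 n0 = C0.
Proof.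
  intros Ha k0 n0 Hk0 Hn0.
  assert (E := dft2_inversion_sum a k0 n0).
  rewrite Csum_eq_0 in E by (intros; apply Csum_eq_0; intros; rewrite Ha by auto; apply Cmul_0_r).
  rewrite (Csum_single L _ k0), (Csum_single L _ n0) in E; auto.
  - rewrite !Rminus_diag, omega_sum_0 in E.
    destruct (Cmul_integral _ _ (eq_sym E)) as [|E']; auto.
    assert (0 < INR L) by (apply lt_0_INR; lia).
    destruct (Cmul_integral _ _ E') as [E'' | E'']; injection E''; lra.
  - intros n Hn Hne; rewrite omega_sum_orth, Cmul_0_l by auto; apply Cmul_0_r.
  - intros k Hk Hne; apply Csum_eq_0; intros.
    rewrite (omega_sum_orth L k0 k), !Cmul_0_r by auto; auto.
Qed.

Lemma tfshift_index_add q m k : (k < L)%nat ->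
  (((q + m) mod L) mod L + L - k mod L) mod L = ((q + m + L - k) mod L)%nat.
Proof.
  intros Hk; rewrite Nat.Div0.mod_mod, (Nat.mod_small k) by auto.
  replace ((q + m) mod L + L - k)%nat with ((q + m) mod L + (L - k))%nat by lia.
  rewrite Nat.Div0.add_mod_idemp_l; f_equal; lia.
Qed.

Variable c : cvec.

(** The [k]-th time shift only rotates the summation range of the ambiguity function. *)
Lemma ambiguity_rotate m eta k : (k < L)%nat ->
  Csum L (fun q => Cmul (omega L (- (INR eta * INR q)))
    (Cmul (c ((q + m + L - k) mod L)%nat) (Cconj (c ((q + L - k) mod L)%nat))))
  = Cmul (omega L (- (INR eta * INR k))) (ambiguity L m eta c c).
Proof.
  intros Hk.
  rewrite <- Csum_periodic with (k := k).
  - unfold ambiguity; rewrite Csum_mul_l; apply Csum_ext; intros j Hj.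
    replace ((j + k + m + L - k) mod L)%nat with ((j + m) mod L)%nat
      by (replace (j + k + m + L - k)%nat with (j + m + L)%nat by lia; symmetry; apply mod_add_L).
    replace ((j + k + L - k) mod L)%nat with j
      by (replace (j + k + L - k)%nat with (j + L)%nat by lia; rewrite mod_add_L, Nat.mod_small; auto).
    replace (omega L (- (INR eta * INR (j + k))))
      with (Cmul (omega L (- (INR eta * INR k))) (omega L (- (INR eta * INR j))))
      by (rewrite omega_add, plus_INR; f_equal; ring).
    generalize (omega L (- (INR eta * INR k))) (omega L (- (INR eta * INR j)))
      (c ((j + m) mod L)%nat) (c j); intros; Cring.
  - intros q; cbv beta.
    replace (q + L + m + L - k)%nat with (q + m + L - k + L)%nat by lia.
    replace (q + L + L - k)%nat with (q + L - k + L)%nat by lia.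
    rewrite !mod_add_L, <- (omega_period L (- (INR eta * INR (q + L))) eta HL0), plus_INR.
    f_equal; f_equal; ring.
Qed.

Lemma pattern_diagonal_sum a m eta : (m < L)%nat ->
  Csum L (fun q => Cmul (omega L (- (INR eta * INR q))) (pattern_entry L c a ((q + m) mod L)%nat q))
  = Cmul (ambiguity L m eta c c) (dft2 L a m eta).
Proof.
  intros Hm; unfold pattern_entry, dft2.
  rewrite Csum_mul_l.
  rewrite (Csum_ext L _ (fun q => Csum L (fun k => Cmul (omega L (- (INR eta * INR q)))
      (Csum L (fun n => Cmul (a k n)
        (Cmul (tfshift L k n c ((q + m) mod L)%nat) (Cconj (tfshift L k n c q))))))))
    by (intros; apply Csum_mul_l).
  rewrite Csum_comm; apply Csum_ext; intros k Hk.
  rewrite (Csum_ext L _ (fun q => Csum L (fun n => Cmul (omega L (- (INR eta * INR q)))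
      (Cmul (a k n) (Cmul (tfshift L k n c ((q + m) mod L)%nat) (Cconj (tfshift L k n c q)))))))
    by (intros; apply Csum_mul_l).
  rewrite Csum_comm, Csum_mul_l; apply Csum_ext; intros n Hn.
  transitivity (Cmul (Cmul (a k n) (omega L (INR n * INR m)))
    (Cmul (omega L (- (INR eta * INR k))) (ambiguity L m eta c c))).
  2:{ generalize (a k n) (omega L (INR n * INR m)) (omega L (- (INR eta * INR k)))
        (ambiguity L m eta c c); intros; Cring. }
  rewrite <- ambiguity_rotate, Csum_mul_l by auto; apply Csum_ext; intros q Hq.
  rewrite !tfshift_eq, tfshift_index_add, (Nat.mod_small q), (Nat.mod_small k),
    omega_mul_mod, Cconj_mul, omega_conj by auto.
  replace (omega L (INR n * INR m))
    with (Cmul (omega L (INR n * INR (q + m))) (omega L (- (INR n * INR q))))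
    by (rewrite omega_add, plus_INR; f_equal; ring).
  generalize (omega L (INR n * INR (q + m))) (omega L (- (INR n * INR q)))
    (omega L (- (INR eta * INR q))) (c ((q + m + L - k) mod L)%nat)
    (Cconj (c ((q + L - k) mod L)%nat)) (a k n); intros; Cring.
Qed.

Lemma diag_permissible_of_ambiguity_neq_0 :
  (forall m eta, (m < L)%nat -> (eta < L)%nat -> ambiguity L m eta c c <> C0) ->
  diag_permissible L c.
Proof.
  intros Hamb a Hpat; apply dft2_eq_0; intros m eta Hm Heta.
  pose proof (pattern_diagonal_sum a m eta Hm) as E.
  rewrite Csum_eq_0 in E.
  2:{ intros q Hq; unfold pattern_entry; rewrite Hpat, Cmul_0_r; auto.
      apply Nat.mod_upper_bound; lia. }
  destruct (Cmul_integral _ _ (eq_sym E)) as [E' | E']; auto.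
  exfalso; apply (Hamb m eta); auto.
Qed.

End Reduction.

Lemma ambiguity_root_of_not_diag_permissible L (c : cvec) : (1 <= L)%nat ->
  ~ diag_permissible L c ->
  exists m eta, (m < L)%nat /\ (eta < L)%nat /\ ambiguity L m eta c c = C0.
Proof.
  intros HL Hc; apply NNPP; intros Hno; apply Hc.
  apply diag_permissible_of_ambiguity_neq_0; auto.
  intros m eta Hm Heta E; apply Hno; exists m, eta; auto.
Qed.

Fixpoint Rsum_list {A} (v : A -> R) (l : list A) : R :=
  match l with nil => 0 | a :: l => v a + Rsum_list v l end.

Lemma Rsum_list_app {A} (v : A -> R) l1 l2 :
  Rsum_list v (l1 ++ l2) = Rsum_list v l1 + Rsum_list v l2.
Proof. induction l1; simpl; [ring | rewrite IHl1; ring]. Qed.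

Lemma Rsum_list_map {A B} (v : B -> R) (f : A -> B) l :
  Rsum_list v (map f l) = Rsum_list (fun a => v (f a)) l.
Proof. induction l; simpl; auto; rewrite IHl; auto. Qed.

Lemma Rsum_list_ext {A} (v w : A -> R) l :
  (forall a, In a l -> v a = w a) -> Rsum_list v l = Rsum_list w l.
Proof. induction l; simpl; intros H; auto; rewrite H, IHl; auto. Qed.

Lemma Rsum_list_le {A} (v w : A -> R) l :
  (forall a, In a l -> v a <= w a) -> Rsum_list v l <= Rsum_list w l.
Proof.
  induction l; simpl; intros H; [lra|].
  pose proof (H a (or_introl eq_refl)); pose proof (IHl (fun b Hb => H b (or_intror Hb))); lra.
Qed.

Lemma Rsum_list_nonneg {A} (v : A -> R) l : (forall a, 0 <= v a) -> 0 <= Rsum_list v l.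
Proof. induction l; simpl; intros H; [lra|]; pose proof (H a); pose proof (IHl H); lra. Qed.

Lemma Rsum_list_incl {A} (v : A -> R) (l1 l2 : list A) :
  (forall a, 0 <= v a) -> NoDup l1 -> incl l1 l2 -> Rsum_list v l1 <= Rsum_list v l2.
Proof.
  intros Hv; revert l2; induction l1 as [|a l1 IH]; intros l2 Hnd Hi; simpl.
  - apply Rsum_list_nonneg; auto.
  - destruct (in_split a l2) as [la [lb ->]]; [apply Hi; left; auto|].
    inversion Hnd; subst.
    assert (Rsum_list v l1 <= Rsum_list v (la ++ lb)).
    { apply IH; auto; intros y Hy.
      destruct (in_app_or _ _ _ (Hi y (or_intror Hy))) as [H | [<- | H]];
        auto using in_or_app; tauto. }
    rewrite Rsum_list_app in *; simpl; lra.
Qed.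

Lemma Rsum_list_prod {A B} (v : A * B -> R) l1 l2 :
  Rsum_list v (list_prod l1 l2) = Rsum_list (fun a => Rsum_list (fun b => v (a, b)) l2) l1.
Proof. induction l1; simpl; auto; rewrite Rsum_list_app, IHl1, Rsum_list_map; auto. Qed.

Lemma Rsum_n_seq m f : Rsum_n m f = Rsum_list f (seq 0 m).
Proof.
  induction m; [reflexivity|].
  change (Rsum_n (S m) f) with (Rsum_n m f + f m).
  rewrite seq_S, Rsum_list_app, IHm; simpl; ring.
Qed.

Lemma Rsum_n_ext m f g : (forall j, (j < m)%nat -> f j = g j) -> Rsum_n m f = Rsum_n m g.
Proof. induction m; simpl; intros H; auto; rewrite IHm, H; auto. Qed.

Lemma Rsum_n_half_geom eps m : Rsum_n m (fun n => eps / 2 ^ S n) = eps - eps / 2 ^ m.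
Proof.
  induction m; [simpl; field|].
  change (Rsum_n (S m) (fun n => eps / 2 ^ S n)) with (Rsum_n m (fun n => eps / 2 ^ S n) + eps / 2 ^ S m).
  rewrite IHm; simpl; field; apply pow_nonzero; lra.
Qed.

(** Summing over the first [m] Cantor codes only visits pairs with both entries below [m]. *)
Lemma Rsum_n_cantor_le m (V : nat * nat -> R) : (forall p, 0 <= V p) ->
  Rsum_n m (fun j => V (of_nat j)) <= Rsum_n m (fun n => Rsum_n m (fun j => V (n, j))).
Proof.
  intros HV; rewrite Rsum_n_seq, <- Rsum_list_map.
  apply Rle_trans with (Rsum_list V (list_prod (seq 0 m) (seq 0 m))).
  - apply Rsum_list_incl; auto.
    + apply NoDup_map_NoDup_ForallPairs; [|apply seq_NoDup].
      intros x y _ _ Hxy; rewrite <- (cancel_to_of x), <- (cancel_to_of y), Hxy; auto.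
    + intros [x y] Hp; apply in_map_iff in Hp; destruct Hp as [j [Hj1 Hj2]]; apply in_seq in Hj2.
      pose proof (to_nat_non_decreasing x y) as Hb; rewrite <- Hj1, cancel_to_of in Hb.
      apply in_prod; apply in_seq; lia.
  - rewrite Rsum_list_prod, Rsum_n_seq; right.
    apply Rsum_list_ext; intros; rewrite Rsum_n_seq; auto.
Qed.

Definition box_volume (d : nat) (lo hi : nat -> nat -> R) (j : nat) : R :=
  Rprod_n d (fun i => hi j i - lo j i).

Definition box_cover (d : nat) (eps : R) (N : (nat -> R) -> Prop) (lo hi : nat -> nat -> R) :=
  (forall j i, (i < d)%nat -> lo j i <= hi j i) /\
  (forall m, Rsum_n m (box_volume d lo hi) <= eps) /\
  (forall x, N x -> exists j, forall i, (i < d)%nat -> lo j i <= x i <= hi j i).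

Lemma Rprod_n_nonneg d f : (forall i, (i < d)%nat -> 0 <= f i) -> 0 <= Rprod_n d f.
Proof. induction d; simpl; intros H; [lra|]; apply Rmult_le_pos; [apply IHd | apply H]; auto. Qed.

Lemma Rprod_n_ext d f g : (forall i, (i < d)%nat -> f i = g i) -> Rprod_n d f = Rprod_n d g.
Proof. induction d; simpl; intros H; auto; rewrite IHd, H; auto. Qed.

Lemma Rprod_n_const n b : Rprod_n n (fun _ => b) = b ^ n.
Proof. induction n; simpl; [auto | rewrite IHn; ring]. Qed.

Lemma Rprod_n_single d i a b : (i < d)%nat ->
  Rprod_n d (fun k => if Nat.eqb k i then a else b) = a * b ^ (d - 1).
Proof.
  induction d; intros Hi; [lia|]; simpl Rprod_n.
  destruct (Nat.eqb_spec d i) as [-> | Hne].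
  - rewrite (Rprod_n_ext _ _ (fun _ => b)), Rprod_n_const.
    + replace (S i - 1)%nat with i by lia; ring.
    + intros k Hk; destruct (Nat.eqb_spec k i); auto; lia.
  - rewrite IHd by lia; replace (S d - 1)%nat with (S (d - 1)) by lia; simpl; ring.
Qed.

Lemma null_subset d (A B : (nat -> R) -> Prop) :
  lebesgue_null d B -> (forall x, A x -> B x) -> lebesgue_null d A.
Proof.
  intros HB Hs eps He; destruct (HB eps He) as [lo [hi [H1 [H2 H3]]]].
  exists lo, hi; repeat split; auto.
Qed.

Lemma null_empty d (A : (nat -> R) -> Prop) : (1 <= d)%nat -> (forall x, ~ A x) -> lebesgue_null d A.
Proof.
  intros Hd HA eps He; exists (fun _ _ => 0), (fun _ _ => 0); split; [|split].
  - intros; lra.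
  - intros m; rewrite Rsum_n_seq, (Rsum_list_ext _ (fun _ => 0)).
    + induction (seq 0 m); simpl; lra.
    + intros; unfold box_volume; rewrite Rminus_diag, Rprod_n_const.
      destruct d; [lia|]; simpl; ring.
  - intros y Hy; exfalso; apply (HA y Hy).
Qed.

Lemma null_countable_union d (A : nat -> (nat -> R) -> Prop) (B : (nat -> R) -> Prop) :
  (forall n, lebesgue_null d (A n)) -> (forall x, B x -> exists n, A n x) -> lebesgue_null d B.
Proof.
  intros HA HB eps He.
  assert (Hcov : forall n, exists p : (nat -> nat -> R) * (nat -> nat -> R),
     box_cover d (eps / 2 ^ S n) (A n) (fst p) (snd p)).
  { intros n; assert (Hp : 0 < eps / 2 ^ S n) by (apply Rdiv_lt_0_compat; auto; apply pow_lt; lra).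
    destruct (HA n _ Hp) as [lo [hi H]]; exists (lo, hi); exact H. }
  destruct (choice _ Hcov) as [P HP].
  set (V := fun nj : nat * nat => box_volume d (fst (P (fst nj))) (snd (P (fst nj))) (snd nj)).
  assert (HV : forall nj, 0 <= V nj).
  { intros [n j]; apply Rprod_n_nonneg; intros i Hi.
    destruct (HP n) as [H1 _]; specialize (H1 j i Hi); simpl; lra. }
  exists (fun j => fst (P (fst (of_nat j))) (snd (of_nat j))),
         (fun j => snd (P (fst (of_nat j))) (snd (of_nat j))).
  split; [|split].
  - intros j i Hi; apply (proj1 (HP (fst (of_nat j)))); auto.
  - intros m; apply Rle_trans with (Rsum_n m (fun n => Rsum_n m (fun j => V (n, j)))).
    { apply (Rsum_n_cantor_le m V HV). }
    apply Rle_trans with (Rsum_n m (fun n => eps / 2 ^ S n)).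
    + rewrite !Rsum_n_seq; apply Rsum_list_le; intros n _.
      apply (proj1 (proj2 (HP n))).
    + rewrite Rsum_n_half_geom.
      assert (0 < eps / 2 ^ m) by (apply Rdiv_lt_0_compat; auto; apply pow_lt; lra); lra.
  - intros x Hx; destruct (HB x Hx) as [n Hn].
    destruct (proj2 (proj2 (HP n)) x Hn) as [j Hj].
    exists (to_nat (n, j)); rewrite cancel_of_to; auto.
Qed.

Lemma null_union d (A B : (nat -> R) -> Prop) :
  lebesgue_null d A -> lebesgue_null d B -> lebesgue_null d (fun x => A x \/ B x).
Proof.
  intros HA HB; apply (null_countable_union d (fun n => match n with O => A | _ => B end)).
  - intros [|n]; auto.
  - intros x [H | H]; [exists O | exists 1%nat]; auto.
Qed.

(** * Graphs of Lipschitz functions are null *)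

(** All functions [ks -> {0, ..., M-1}], extended by [0] off [ks]. *)
Fixpoint grid (M : nat) (ks : list nat) : list (nat -> nat) :=
  match ks with
  | nil => (fun _ => 0%nat) :: nil
  | k :: ks' => flat_map (fun f => map (fun v j => if Nat.eqb j k then v else f j) (seq 0 M)) (grid M ks')
  end.

Lemma grid_length M ks : length (grid M ks) = (M ^ length ks)%nat.
Proof.
  induction ks; simpl; auto.
  rewrite flat_map_constant_length with (c := M), IHks; [lia|].
  intros; rewrite length_map, length_seq; auto.
Qed.

Lemma grid_complete M ks (P : nat -> nat -> Prop) :
  (forall k, In k ks -> exists v, (v < M)%nat /\ P k v) ->
  exists f, In f (grid M ks) /\ forall k, In k ks -> P k (f k).
Proof.
  induction ks as [|k ks IH]; intros H.
  - exists (fun _ => 0%nat); simpl; split; [auto | intros k []].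
  - destruct IH as [f [Hf1 Hf2]]; [intros; apply H; right; auto|].
    destruct (H k (or_introl eq_refl)) as [v [Hv1 Hv2]].
    exists (fun j => if Nat.eqb j k then v else f j); split.
    + simpl; apply in_flat_map; exists f; split; auto.
      apply in_map_iff; exists v; split; auto; apply in_seq; lia.
    + intros k' [<- | Hk']; [rewrite Nat.eqb_refl; auto|].
      destruct (Nat.eqb_spec k' k) as [-> |]; auto.
Qed.

Lemma length_filter_neq d i : (i < d)%nat ->
  length (filter (fun k => negb (Nat.eqb k i)) (seq 0 d)) = (d - 1)%nat.
Proof.
  intros Hi; enough (forall n, length (filter (fun k => negb (Nat.eqb k i)) (seq 0 n))
                              = if Nat.ltb i n then (n - 1)%nat else n) as E.
  { rewrite E; destruct (Nat.ltb_spec i d); lia. }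
  induction n; auto.
  rewrite seq_S, filter_app, length_app, IHn; simpl.
  destruct (Nat.eqb_spec n i), (Nat.ltb_spec i n), (Nat.ltb_spec i (S n)); simpl; lia.
Qed.

Lemma In_filter_neq d i k :
  In k (filter (fun k => negb (Nat.eqb k i)) (seq 0 d)) <-> (k < d)%nat /\ k <> i.
Proof. rewrite filter_In, in_seq; destruct (Nat.eqb_spec k i); simpl; intuition lia. Qed.

Lemma Rsum_n_indicator_le m len V : 0 <= V ->
  Rsum_n m (fun j => if Nat.ltb j len then V else 0) <= INR len * V.
Proof.
  intros HV; enough (Rsum_n m (fun j => if Nat.ltb j len then V else 0) = INR (Nat.min m len) * V) as ->.
  { apply Rmult_le_compat_r; auto; apply le_INR; lia. }
  induction m; [simpl; ring|].
  change (Rsum_n (S m) ?f) with (Rsum_n m f + f m); cbv beta.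
  rewrite IHm; destruct (Nat.ltb_spec m len).
  - replace (Nat.min (S m) len) with (S (Nat.min m len)) by lia; rewrite S_INR; ring.
  - replace (Nat.min (S m) len) with (Nat.min m len) by lia; ring.
Qed.

Lemma Rabs_le_between x b : Rabs x <= b -> - b <= x <= b.
Proof. unfold Rabs; destruct (Rcase_abs x); lra. Qed.

Definition cell (N s : R) (v : nat) (y : R) : Prop := -N + INR v * s <= y <= -N + INR v * s + s.

Lemma nat_floor_lt M r : (1 <= M)%nat -> 0 <= r <= INR M ->
  exists v, (v < M)%nat /\ INR v <= r <= INR v + 1.
Proof.
  induction M as [|M IH]; intros HM Hr; [lia|].
  destruct (Nat.eq_dec M 0) as [-> | HM0].
  - exists 0%nat; simpl in *; split; [lia | lra].
  - destruct (Rle_dec r (INR M)).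
    + destruct (IH ltac:(lia) ltac:(lra)) as [v [Hv Hrv]]; exists v; split; auto; lia.
    + exists M; rewrite S_INR in Hr; split; [lia | lra].
Qed.

Lemma cell_exists M N y : (1 <= M)%nat -> 0 < N -> Rabs y <= N ->
  exists v, (v < M)%nat /\ cell N (2 * N / INR M) v y.
Proof.
  intros HM HN Hy; set (s := 2 * N / INR M).
  assert (HMpos : 0 < INR M) by (apply lt_0_INR; lia).
  assert (Hs : 0 < s) by (unfold s; apply Rdiv_lt_0_compat; lra).
  apply Rabs_le_between in Hy.
  destruct (nat_floor_lt M ((y + N) / s)) as [v [Hv [Hv1 Hv2]]]; auto.
  { split; [unfold Rdiv; apply Rmult_le_pos; [lra | left; apply Rinv_0_lt_compat; lra]|].
    apply Rmult_le_reg_r with s; auto; unfold Rdiv; rewrite Rmult_assoc, Rinv_l by lra.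
    unfold s; field_simplify; lra. }
  exists v; split; auto.
  apply Rmult_le_compat_r with (r := s) in Hv1; [|lra].
  apply Rmult_le_compat_r with (r := s) in Hv2; [|lra].
  unfold Rdiv in Hv1, Hv2; rewrite Rmult_assoc, Rinv_l, Rmult_1_r in Hv1, Hv2 by lra.
  unfold cell; lra.
Qed.

Lemma grid_volume_le M d C N eps : (1 <= d)%nat -> 0 < eps -> 0 < INR M ->
  2 * C * (2 * N) ^ d / eps < INR M ->
  INR (M ^ (d - 1)) * (2 * C * (2 * N / INR M) * (2 * N / INR M) ^ (d - 1)) <= eps.
Proof.
  intros Hd He HM HMe.
  replace (INR (M ^ (d - 1)) * (2 * C * (2 * N / INR M) * (2 * N / INR M) ^ (d - 1)))
    with (2 * C * (2 * N) ^ d / eps * (eps / INR M)).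
  - apply Rle_trans with (INR M * (eps / INR M)); [|right; field; lra].
    apply Rmult_le_compat_r; [apply Rlt_le, Rdiv_lt_0_compat|]; lra.
  - destruct d as [|e]; [lia|]; replace (S e - 1)%nat with e by lia.
    rewrite pow_INR, <- tech_pow_Rmult; unfold Rdiv; rewrite (Rpow_mult_distr (2 * N)), pow_inv.
    field; repeat split; try lra; apply pow_nonzero; lra.
Qed.

Definition in_cells (ks : list nat) (N s : R) (f : nat -> nat) (x : nat -> R) : Prop :=
  forall k, In k ks -> cell N s (f k) (x k).

Lemma in_cells_close ks N s f x x' : in_cells ks N s f x -> in_cells ks N s f x' ->
  forall k, In k ks -> Rabs (x k - x' k) <= s.
Proof. intros Hx Hx' k Hk; specialize (Hx k Hk); specialize (Hx' k Hk); unfold cell in *; apply Rabs_le; lra. Qed.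

Definition bounded_on (J : nat -> Prop) (N : R) (x : nat -> R) : Prop :=
  forall k, J k -> Rabs (x k) <= N.

Definition close_on (J : nat -> Prop) (s : R) (x x' : nat -> R) : Prop :=
  forall k, J k -> Rabs (x k - x' k) <= s.

Definition coords (d : nat) : nat -> Prop := fun k => (k < d)%nat.
Definition coords_off (d i : nat) : nat -> Prop := fun k => (k < d)%nat /\ k <> i.

(** [A] lies in the graph of a [C]-Lipschitz function of the coordinates other than [i]. *)
Definition lipschitz_in_coord (d i : nat) (A : (nat -> R) -> Prop) (C : R) : Prop :=
  forall x x' s, A x -> A x' -> 0 <= s ->
    close_on (coords_off d i) s x x' -> Rabs (x i - x' i) <= C * s.

Lemma null_lipschitz_graph_bounded d i (A : (nat -> R) -> Prop) (N C : R) :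
  (i < d)%nat -> 0 < N -> 0 <= C ->
  (forall x, A x -> bounded_on (coords_off d i) N x) ->
  lipschitz_in_coord d i A C -> lebesgue_null d A.
Proof.
  intros Hi HN HC Hb Hlip eps He.
  destruct (INR_unbounded (2 * C * (2 * N) ^ d / eps)) as [M0 HM0]; set (M := S M0).
  assert (HM : 2 * C * (2 * N) ^ d / eps < INR M) by (unfold M; rewrite S_INR; lra).
  assert (HMpos : 0 < INR M) by (apply lt_0_INR; unfold M; lia).
  set (s := 2 * N / INR M); assert (Hs : 0 < s) by (unfold s; apply Rdiv_lt_0_compat; lra).
  set (ks := filter (fun k => negb (Nat.eqb k i)) (seq 0 d)).
  assert (Hks : forall k, In k ks <-> (k < d)%nat /\ k <> i) by apply In_filter_neq.
  set (G := grid M ks); set (len := length G); set (fj := fun j => nth j G (fun _ => 0%nat)).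
  (* a point of [A] in the grid cell [f], if there is one *)
  set (pick := fun f => epsilon (inhabits (fun _ : nat => 0)) (fun x => A x /\ in_cells ks N s f x)).
  exists (fun j k => if Nat.ltb j len then
           (if Nat.eqb k i then pick (fj j) i - C * s else -N + INR (fj j k) * s) else 0).
  exists (fun j k => if Nat.ltb j len then
           (if Nat.eqb k i then pick (fj j) i + C * s else -N + INR (fj j k) * s + s) else 0).
  split; [|split].
  - intros j k Hk; destruct (Nat.ltb j len); [destruct (Nat.eqb k i); nra | lra].
  - intros m; set (V := 2 * C * s * s ^ (d - 1)).
    apply Rle_trans with (Rsum_n m (fun j => if Nat.ltb j len then V else 0)).
    { right; apply Rsum_n_ext; intros j _; unfold box_volume; destruct (Nat.ltb j len).
      - unfold V; rewrite <- (Rprod_n_single d i) by auto; apply Rprod_n_ext; intros k _.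
        destruct (Nat.eqb k i); ring.
      - rewrite Rminus_diag, Rprod_n_const; destruct d; [lia|]; simpl; ring. }
    apply Rle_trans with (INR len * V).
    { apply Rsum_n_indicator_le; unfold V; apply Rmult_le_pos; [nra | apply pow_le; lra]. }
    unfold len, G, ks, V, s; rewrite grid_length, length_filter_neq by auto.
    apply grid_volume_le; auto; lia.
  - intros x Hx.
    destruct (grid_complete M ks (fun k v => cell N s v (x k))) as [f [Hf Hcell]].
    { intros k Hk; apply Hks in Hk; apply cell_exists; [unfold M; lia | auto | apply Hb; auto]. }
    destruct (In_nth _ _ (fun _ => 0%nat) Hf) as [j [Hj Hfj]].
    exists j; intros k Hk; fold len in Hj.
    replace (Nat.ltb j len) with true by (symmetry; apply Nat.ltb_lt; auto).
    replace (fj j) with f by auto.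
    destruct (Nat.eqb_spec k i) as [-> | Hki]; [|apply Hcell, Hks; auto].
    destruct (epsilon_spec (inhabits (fun _ : nat => 0)) (fun x => A x /\ in_cells ks N s f x)
               (ex_intro _ x (conj Hx Hcell))) as [Hx' Hcell'].
    assert (Rabs (x i - pick f i) <= C * s) as Hxi%Rabs_le_between; [|lra].
    apply Hlip; auto; [lra|]; intros k' Hk'.
    apply (in_cells_close ks N s f); auto; apply Hks, Hk'.
Qed.

Lemma bounded_on_exists J d x : (forall k, J k -> (k < d)%nat) ->
  exists n : nat, bounded_on J (INR (S n)) x.
Proof.
  intros HJ; enough (exists n : nat, forall k, (k < d)%nat -> Rabs (x k) <= INR n) as [n Hn].
  { exists n; intros k Hk; rewrite S_INR; specialize (Hn k (HJ k Hk)); lra. }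
  clear HJ; induction d as [|d [n1 H1]]; [exists 0%nat; intros; lia|].
  destruct (INR_unbounded (Rabs (x d))) as [n2 H2]; exists (n1 + n2)%nat; intros k Hk.
  rewrite plus_INR; pose proof (pos_INR n1); pose proof (pos_INR n2).
  destruct (Nat.eq_dec k d) as [-> |]; [lra|]; specialize (H1 k ltac:(lia)); lra.
Qed.

Lemma null_lipschitz_graph d i (A : (nat -> R) -> Prop) : (i < d)%nat ->
  (forall N, 0 < N -> exists C, 0 <= C /\
     lipschitz_in_coord d i (fun x => A x /\ bounded_on (coords_off d i) N x) C) ->
  lebesgue_null d A.
Proof.
  intros Hi H.
  apply (null_countable_union d (fun n x => A x /\ bounded_on (coords_off d i) (INR (S n)) x)).
  - intros n; assert (HN : 0 < INR (S n)) by (apply lt_0_INR; lia).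
    destruct (H _ HN) as [C [HC Hlip]].
    apply (null_lipschitz_graph_bounded d i _ (INR (S n)) C); auto.
    intros x [_ Hx]; exact Hx.
  - intros x Hx; destruct (bounded_on_exists (coords_off d i) d x) as [n Hn];
      [intros k []; auto | exists n; auto].
Qed.

Lemma exists_inv_nat_le r : 0 < r -> exists n, / INR (S n) <= r.
Proof.
  intros Hr; destruct (INR_unbounded (/ r)) as [n Hn]; exists n.
  rewrite <- (Rinv_inv r); apply Rinv_le_contravar; [apply Rinv_0_lt_compat; auto|].
  rewrite S_INR; lra.
Qed.

Definition loc_lipschitz (J : nat -> Prop) (F : (nat -> R) -> R) : Prop :=
  forall N, 0 <= N -> exists K B, 0 <= K /\
    (forall x, bounded_on J N x -> Rabs (F x) <= B) /\
    (forall x x' s, 0 <= s -> bounded_on J N x -> bounded_on J N x' -> close_on J s x x' ->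
       Rabs (F x - F x') <= K * s).

Lemma loc_lipschitz_const J w : loc_lipschitz J (fun _ => w).
Proof.
  intros N HN; exists 0, (Rabs w); split; [lra|]; split; [intros; lra|].
  intros; rewrite Rminus_diag, Rabs_R0; lra.
Qed.

Lemma loc_lipschitz_weaken (J J' : nat -> Prop) F : (forall k, J k -> J' k) ->
  loc_lipschitz J F -> loc_lipschitz J' F.
Proof.
  intros HJ HF N HN; destruct (HF N HN) as [K [B [HK [Hb Hl]]]].
  exists K, B; split; [|split]; auto.
  - intros x Hx; apply Hb; intros k Hk; auto.
  - intros x x' s Hs Hx Hx' Hc; apply Hl; auto; intros k Hk; auto.
Qed.

Lemma loc_lipschitz_coord J k : J k -> loc_lipschitz J (fun x => x k).
Proof.
  intros Hk N HN; exists 1, N; split; [lra|]; split; [intros x Hx; auto|].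
  intros x x' s _ _ _ Hs; rewrite Rmult_1_l; auto.
Qed.

Lemma loc_lipschitz_add J F G : loc_lipschitz J F -> loc_lipschitz J G ->
  loc_lipschitz J (fun x => F x + G x).
Proof.
  intros HF HG N HN.
  destruct (HF N HN) as [K1 [B1 [HK1 [Hb1 Hl1]]]]; destruct (HG N HN) as [K2 [B2 [HK2 [Hb2 Hl2]]]].
  exists (K1 + K2), (B1 + B2); split; [lra|]; split.
  - intros x Hx; eapply Rle_trans; [apply Rabs_triang|]; pose proof (Hb1 x Hx); pose proof (Hb2 x Hx); lra.
  - intros x x' s Hs Hx Hx' Hc.
    replace (F x + G x - (F x' + G x')) with ((F x - F x') + (G x - G x')) by ring.
    eapply Rle_trans; [apply Rabs_triang|].
    pose proof (Hl1 x x' s Hs Hx Hx' Hc); pose proof (Hl2 x x' s Hs Hx Hx' Hc); lra.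
Qed.

Lemma loc_lipschitz_opp J F : loc_lipschitz J F -> loc_lipschitz J (fun x => - F x).
Proof.
  intros HF N HN; destruct (HF N HN) as [K [B [HK [Hb Hl]]]].
  exists K, B; split; [|split]; auto.
  - intros x Hx; rewrite Rabs_Ropp; auto.
  - intros x x' s Hs Hx Hx' Hc; replace (- F x - - F x') with (- (F x - F x')) by ring.
    rewrite Rabs_Ropp; auto.
Qed.

Lemma loc_lipschitz_mul J F G : loc_lipschitz J F -> loc_lipschitz J G ->
  loc_lipschitz J (fun x => F x * G x).
Proof.
  intros HF HG N HN.
  destruct (HF N HN) as [K1 [B1 [HK1 [Hb1 Hl1]]]]; destruct (HG N HN) as [K2 [B2 [HK2 [Hb2 Hl2]]]].
  exists (Rabs B1 * K2 + Rabs B2 * K1), (B1 * B2); split.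
  { pose proof (Rabs_pos B1); pose proof (Rabs_pos B2); nra. }
  split.
  - intros x Hx; rewrite Rabs_mult; apply Rmult_le_compat; auto using Rabs_pos.
  - intros x x' s Hs Hx Hx' Hc.
    replace (F x * G x - F x' * G x') with (F x * (G x - G x') + G x' * (F x - F x')) by ring.
    eapply Rle_trans; [apply Rabs_triang|]; rewrite !Rabs_mult.
    assert (Rabs (F x) <= Rabs B1) by (eapply Rle_trans; [apply Hb1 | apply Rle_abs]; auto).
    assert (Rabs (G x') <= Rabs B2) by (eapply Rle_trans; [apply Hb2 | apply Rle_abs]; auto).
    pose proof (Hl1 x x' s Hs Hx Hx' Hc); pose proof (Hl2 x x' s Hs Hx Hx' Hc).
    apply Rle_trans with (Rabs B1 * (K2 * s) + Rabs B2 * (K1 * s)); [|right; ring].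
    apply Rplus_le_compat; apply Rmult_le_compat; auto using Rabs_pos.
Qed.

Definition upd (x : nat -> R) (i : nat) (t : R) : nat -> R :=
  fun k => if Nat.eqb k i then t else x k.

Lemma bounded_on_upd J N i t x : bounded_on (fun k => J k /\ k <> i) N x ->
  bounded_on J (Rmax N (Rabs t)) (upd x i t).
Proof.
  intros Hx k Hk; unfold upd; destruct (Nat.eqb_spec k i); [apply Rmax_r|].
  eapply Rle_trans; [apply Hx; auto | apply Rmax_l].
Qed.

Lemma loc_lipschitz_upd J i t F : loc_lipschitz J F ->
  loc_lipschitz (fun k => J k /\ k <> i) (fun x => F (upd x i t)).
Proof.
  intros HF N HN; destruct (HF (Rmax N (Rabs t))) as [K [B [HK [Hb Hl]]]].
  { apply Rle_trans with N; auto; apply Rmax_l. }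
  exists K, B; split; [|split]; auto.
  - intros x Hx; apply Hb, bounded_on_upd; auto.
  - intros x x' s Hs Hx Hx' Hc; apply Hl; auto using bounded_on_upd.
    intros k Hk; unfold upd; destruct (Nat.eqb_spec k i).
    + rewrite Rminus_diag, Rabs_R0; auto.
    + apply Hc; auto.
Qed.

Lemma loc_lipschitz_upd_off d i t F : loc_lipschitz (coords d) F ->
  loc_lipschitz (coords_off d i) (fun x => F (upd x i t)).
Proof. apply loc_lipschitz_upd. Qed.

Definition Cloc_lipschitz (J : nat -> Prop) (F : (nat -> R) -> Defs.C) : Prop :=
  loc_lipschitz J (fun x => fst (F x)) /\ loc_lipschitz J (fun x => snd (F x)).

Lemma Cloc_lipschitz_const J z : Cloc_lipschitz J (fun _ => z).
Proof. split; apply loc_lipschitz_const. Qed.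

Lemma Cloc_lipschitz_add J F G : Cloc_lipschitz J F -> Cloc_lipschitz J G ->
  Cloc_lipschitz J (fun x => Cadd (F x) (G x)).
Proof. intros [F1 F2] [G1 G2]; split; apply loc_lipschitz_add; auto. Qed.

Lemma Cloc_lipschitz_mul J F G : Cloc_lipschitz J F -> Cloc_lipschitz J G ->
  Cloc_lipschitz J (fun x => Cmul (F x) (G x)).
Proof.
  intros [F1 F2] [G1 G2]; split; simpl.
  - apply (loc_lipschitz_add J (fun x => fst (F x) * fst (G x)) (fun x => - (snd (F x) * snd (G x))));
      [|apply loc_lipschitz_opp]; apply loc_lipschitz_mul; auto.
  - apply loc_lipschitz_add; apply loc_lipschitz_mul; auto.
Qed.

Lemma Cloc_lipschitz_conj J F : Cloc_lipschitz J F -> Cloc_lipschitz J (fun x => Cconj (F x)).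
Proof. intros [F1 F2]; split; simpl; [|apply loc_lipschitz_opp]; auto. Qed.

Lemma Cloc_lipschitz_sum J n (F : nat -> (nat -> R) -> Defs.C) :
  (forall j, (j < n)%nat -> Cloc_lipschitz J (F j)) ->
  Cloc_lipschitz J (fun x => Csum n (fun j => F j x)).
Proof.
  induction n; intros H; simpl; [apply Cloc_lipschitz_const|].
  apply Cloc_lipschitz_add; [apply IHn; intros; apply H | apply H]; lia.
Qed.

Lemma Cloc_lipschitz_vec_of_real L p : (p < L)%nat ->
  Cloc_lipschitz (coords (2 * L)) (fun x => vec_of_real x p).
Proof. intros Hp; split; simpl; apply loc_lipschitz_coord; unfold coords; lia. Qed.

Lemma Cloc_lipschitz_ambiguity L m xi (c c' : (nat -> R) -> cvec) : (1 <= L)%nat ->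
  (forall p, (p < L)%nat -> Cloc_lipschitz (coords (2 * L)) (fun x => c x p)) ->
  (forall p, (p < L)%nat -> Cloc_lipschitz (coords (2 * L)) (fun x => c' x p)) ->
  Cloc_lipschitz (coords (2 * L)) (fun x => ambiguity L m xi (c x) (c' x)).
Proof.
  intros HL Hc Hc'; apply Cloc_lipschitz_sum; intros j Hj.
  repeat apply Cloc_lipschitz_mul; auto using Cloc_lipschitz_conj, Cloc_lipschitz_const.
  apply Hc, Nat.mod_upper_bound; lia.
Qed.

(** The real part of [conj u * z]: a real-linear functional on [C]. *)
Definition Cdot (u z : Defs.C) : R := fst u * fst z + snd u * snd z.

Lemma Cdot_add u z w : Cdot u (Cadd z w) = Cdot u z + Cdot u w.
Proof. unfold Cdot, Cadd; simpl; ring. Qed.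

Lemma Cdot_scale u t z : Cdot u (Cscale t z) = t * Cdot u z.
Proof. unfold Cdot, Cscale; simpl; ring. Qed.

Lemma loc_lipschitz_Cdot J u F : Cloc_lipschitz J F -> loc_lipschitz J (fun x => Cdot u (F x)).
Proof.
  intros [F1 F2]; unfold Cdot.
  apply loc_lipschitz_add; apply loc_lipschitz_mul; auto using loc_lipschitz_const.
Qed.

(** * Zero sets of functions affine or quadratic in one coordinate *)

Lemma lipschitz_affine_root d i (g a : (nat -> R) -> R) q N : 0 < q -> 0 <= N ->
  loc_lipschitz (coords_off d i) g -> loc_lipschitz (coords_off d i) a ->
  exists C, 0 <= C /\ lipschitz_in_coord d i
    (fun x => (g x + x i * a x = 0 /\ q <= Rabs (a x)) /\ bounded_on (coords_off d i) N x) C.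
Proof.
  intros Hq HN Hg Ha.
  destruct (Hg N HN) as [Kg [Bg [HKg [Hgb Hgl]]]]; destruct (Ha N HN) as [Ka [Ba [HKa [Hab Hal]]]].
  exists ((Rabs Bg * Ka + Rabs Ba * Kg) / (q * q)); split.
  { apply Rmult_le_pos; [pose proof (Rabs_pos Bg); pose proof (Rabs_pos Ba); nra|].
    left; apply Rinv_0_lt_compat; nra. }
  intros x x' s [[Fx Ax] Nx] [[Fx' Ax'] Nx'] Hs Hclose.
  assert (E : (x i - x' i) * (a x * a x') = g x' * (a x - a x') + a x' * (g x' - g x)).
  { replace (g x) with (- (x i * a x)) by lra; replace (g x') with (- (x' i * a x')) by lra; ring. }
  assert (Hbound : Rabs (x i - x' i) * (Rabs (a x) * Rabs (a x')) <= (Rabs Bg * Ka + Rabs Ba * Kg) * s).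
  { rewrite <- !Rabs_mult, E; eapply Rle_trans; [apply Rabs_triang|]; rewrite !Rabs_mult.
    rewrite (Rabs_minus_sym (g x') (g x)).
    assert (Rabs (g x') <= Rabs Bg) by (eapply Rle_trans; [apply Hgb | apply Rle_abs]; auto).
    assert (Rabs (a x') <= Rabs Ba) by (eapply Rle_trans; [apply Hab | apply Rle_abs]; auto).
    pose proof (Hal x x' s Hs Nx Nx' Hclose); pose proof (Hgl x x' s Hs Nx Nx' Hclose).
    apply Rle_trans with (Rabs Bg * (Ka * s) + Rabs Ba * (Kg * s)); [|right; ring].
    apply Rplus_le_compat; apply Rmult_le_compat; auto using Rabs_pos. }
  assert (q * q <= Rabs (a x) * Rabs (a x')) by (apply Rmult_le_compat; lra).
  pose proof (Rabs_pos (x i - x' i)).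
  apply Rmult_le_reg_r with (q * q); [nra|].
  apply Rle_trans with (Rabs (x i - x' i) * (Rabs (a x) * Rabs (a x'))); [apply Rmult_le_compat_l; auto|].
  eapply Rle_trans; [apply Hbound | right; field; lra].
Qed.

Lemma null_zero_affine d i F g a : (i < d)%nat ->
  loc_lipschitz (coords_off d i) g -> loc_lipschitz (coords_off d i) a ->
  (forall x, F x = g x + x i * a x) -> lebesgue_null d (fun x => a x = 0) ->
  lebesgue_null d (fun x => F x = 0).
Proof.
  intros Hi Hg Ha HF Ha0.
  apply (null_countable_union d (fun n => match n with
    | O => fun x => a x = 0
    | S n' => fun x => g x + x i * a x = 0 /\ / INR (S n') <= Rabs (a x) end)).
  - intros [|n]; auto; apply null_lipschitz_graph with i; auto; intros N HN.
    apply lipschitz_affine_root; auto; [apply Rinv_0_lt_compat, lt_0_INR | ]; lia || lra.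
  - intros x Fx; rewrite HF in Fx; destruct (Req_dec (a x) 0); [exists O; auto|].
    destruct (exists_inv_nat_le (Rabs (a x))) as [n Hn]; [apply Rabs_pos_lt; auto|].
    exists (S n); auto.
Qed.

Lemma null_zero_linear d i F g w : (1 <= d)%nat -> (i < d)%nat ->
  loc_lipschitz (coords_off d i) g -> w <> 0 ->
  (forall x, F x = g x + x i * w) -> lebesgue_null d (fun x => F x = 0).
Proof.
  intros Hd Hi Hg Hw HF; apply (null_zero_affine d i F g (fun _ => w)); auto.
  - apply loc_lipschitz_const.
  - apply null_empty; auto.
Qed.

Lemma lipschitz_square_root d i g q N sg : 0 < q -> 0 <= N -> sg * sg = 1 ->
  loc_lipschitz (coords_off d i) g ->
  exists C, 0 <= C /\ lipschitz_in_coord d i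
    (fun x => (g x + x i * x i = 0 /\ q <= sg * x i) /\ bounded_on (coords_off d i) N x) C.
Proof.
  intros Hq HN Hsg Hg; destruct (Hg N HN) as [K [B [HK [_ Hgl]]]].
  exists (K / (2 * q)); split; [apply Rmult_le_pos; auto; left; apply Rinv_0_lt_compat; lra|].
  intros x x' s [[Fx Ax] Nx] [[Fx' Ax'] Nx'] Hs Hclose.
  assert (E : (x i - x' i) * (sg * x i + sg * x' i) = sg * (g x' - g x)).
  { replace (g x) with (- (x i * x i)) by lra; replace (g x') with (- (x' i * x' i)) by lra; ring. }
  assert (Hbound : Rabs (x i - x' i) * (sg * x i + sg * x' i) <= K * s).
  { rewrite <- (Rabs_pos_eq (sg * x i + sg * x' i)) by lra.
    rewrite <- Rabs_mult, E, Rabs_mult, Rabs_minus_sym.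
    replace (Rabs sg) with 1.
    2:{ assert (Rabs sg * Rabs sg = 1) by (rewrite <- Rabs_mult, Hsg; apply Rabs_R1).
        pose proof (Rabs_pos sg); nra. }
    rewrite Rmult_1_l; apply (Hgl x x' s Hs Nx Nx' Hclose). }
  pose proof (Rabs_pos (x i - x' i)).
  apply Rmult_le_reg_r with (2 * q); [lra|].
  apply Rle_trans with (Rabs (x i - x' i) * (sg * x i + sg * x' i)); [apply Rmult_le_compat_l; lra|].
  eapply Rle_trans; [apply Hbound | right; field; lra].
Qed.

Lemma null_zero_quadratic d i F g : (1 <= d)%nat -> (i < d)%nat ->
  loc_lipschitz (coords_off d i) g ->
  (forall x, F x = g x + x i * x i) -> lebesgue_null d (fun x => F x = 0).
Proof.
  intros Hd Hi Hg HF.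
  assert (Hsign : forall sg, sg * sg = 1 ->
    lebesgue_null d (fun x => exists n, g x + x i * x i = 0 /\ / INR (S n) <= sg * x i)).
  { intros sg Hsg; apply (null_countable_union d (fun n x => g x + x i * x i = 0 /\ / INR (S n) <= sg * x i)).
    - intros n; apply null_lipschitz_graph with i; auto; intros N HN.
      apply lipschitz_square_root; auto; [apply Rinv_0_lt_compat, lt_0_INR; lia | lra].
    - intros x [n Hx]; exists n; auto. }
  apply null_subset with (fun x => x i = 0 \/
    ((exists n, g x + x i * x i = 0 /\ / INR (S n) <= 1 * x i) \/
     (exists n, g x + x i * x i = 0 /\ / INR (S n) <= -1 * x i))).
  - apply null_union; [|apply null_union; apply Hsign; ring].
    apply (null_zero_linear d i _ (fun _ => 0) 1); auto using loc_lipschitz_const; intros; ring.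
  - intros x Fx; rewrite HF in Fx; destruct (Req_dec (x i) 0); auto; right.
    destruct (exists_inv_nat_le (Rabs (x i))) as [n Hn]; [apply Rabs_pos_lt; auto|].
    destruct (Rcase_abs (x i)); [right; rewrite Rabs_left in Hn | left; rewrite Rabs_pos_eq in Hn];
      try lra; exists n; split; auto; lra.
Qed.

Definition vadd (c : cvec) (t : R) (e : cvec) : cvec := fun p => Cadd (c p) (Cscale t (e p)).
Definition delta (p0 : nat) (z : Defs.C) : cvec := fun p => if Nat.eqb p p0 then z else C0.
Definition e0 : cvec := delta 0 (1, 0).

Lemma upd_same x i : upd x i (x i) = x.
Proof. apply functional_extensionality; intros k; unfold upd; destruct (Nat.eqb_spec k i); subst; auto. Qed.

Lemma vec_of_real_upd_re x p t :
  vec_of_real (upd x (2 * p) t) = vadd (vec_of_real (upd x (2 * p) 0)) t (delta p (1, 0)).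
Proof.
  apply functional_extensionality; intros q; unfold vec_of_real, vadd, delta, upd, Cadd, Cscale, C0.
  destruct (Nat.eqb_spec q p) as [-> |].
  - rewrite !Nat.eqb_refl; destruct (Nat.eqb_spec (2 * p + 1) (2 * p)); [lia|]; simpl; f_equal; ring.
  - destruct (Nat.eqb_spec (2 * q) (2 * p)), (Nat.eqb_spec (2 * q + 1) (2 * p)); try lia.
    simpl; f_equal; ring.
Qed.

Lemma vec_of_real_upd_im x p t :
  vec_of_real (upd x (2 * p + 1) t) = vadd (vec_of_real (upd x (2 * p + 1) 0)) t (delta p (0, 1)).
Proof.
  apply functional_extensionality; intros q; unfold vec_of_real, vadd, delta, upd, Cadd, Cscale, C0.
  destruct (Nat.eqb_spec q p) as [-> |].
  - rewrite !Nat.eqb_refl; destruct (Nat.eqb_spec (2 * p) (2 * p + 1)); [lia|]; simpl; f_equal; ring.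
  - destruct (Nat.eqb_spec (2 * q) (2 * p + 1)), (Nat.eqb_spec (2 * q + 1) (2 * p + 1)); try lia.
    simpl; f_equal; ring.
Qed.

Lemma ambiguity_vadd_l L m xi c t e c' :
  ambiguity L m xi (vadd c t e) c' = Cadd (ambiguity L m xi c c') (Cscale t (ambiguity L m xi e c')).
Proof.
  unfold ambiguity; rewrite Csum_scale, <- Csum_add; apply Csum_ext; intros j _; unfold vadd, Cscale.
  generalize (c ((j + m) mod L)%nat) (e ((j + m) mod L)%nat) (c' j) (omega L (- (INR xi * INR j))).
  intros; Cring.
Qed.

Lemma ambiguity_vadd_r L m xi c t e c' :
  ambiguity L m xi c (vadd c' t e) = Cadd (ambiguity L m xi c c') (Cscale t (ambiguity L m xi c e)).
Proof.
  unfold ambiguity; rewrite Csum_scale, <- Csum_add; apply Csum_ext; intros j _; unfold vadd, Cscale.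
  generalize (c ((j + m) mod L)%nat) (e j) (c' j) (omega L (- (INR xi * INR j))).
  intros; Cring.
Qed.

Lemma ambiguity_vadd_diag L m xi c t e :
  ambiguity L m xi (vadd c t e) (vadd c t e) =
  Cadd (ambiguity L m xi c c)
    (Cscale t (Cadd (Cadd (ambiguity L m xi c e) (ambiguity L m xi e c)) (Cscale t (ambiguity L m xi e e)))).
Proof.
  rewrite ambiguity_vadd_l, !ambiguity_vadd_r.
  generalize (ambiguity L m xi c c) (ambiguity L m xi c e) (ambiguity L m xi e c) (ambiguity L m xi e e).
  unfold Cscale; intros; Cring.
Qed.

Lemma omega_neg_0 L xi : omega L (- (INR xi * INR 0)) = (1, 0).
Proof. change (INR 0) with 0; rewrite Rmult_0_r, Ropp_0; apply omega_0. Qed.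

Lemma ambiguity_e0_r L m xi c : (m < L)%nat -> ambiguity L m xi c e0 = c m.
Proof.
  intros Hm; unfold ambiguity; rewrite (Csum_single L _ 0); [|lia|].
  - rewrite omega_neg_0, Nat.mod_small by auto; unfold e0, delta; simpl.
    generalize (c m); intros; Cring.
  - intros j Hj Hne; unfold e0, delta; destruct (Nat.eqb_spec j 0); [lia|].
    rewrite Cconj_0, Cmul_0_r; apply Cmul_0_l.
Qed.

Lemma mod_add_neq_0 L j m : (j < L)%nat -> (0 < m < L)%nat -> j <> (L - m)%nat -> ((j + m) mod L <> 0)%nat.
Proof.
  intros Hj Hm Hne; destruct (Nat.lt_ge_cases (j + m) L).
  - rewrite Nat.mod_small by auto; lia.
  - replace (j + m)%nat with (j + m - L + L)%nat by lia; rewrite mod_add_L, Nat.mod_small; lia.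
Qed.

Lemma ambiguity_e0_l L m xi c : (0 < m < L)%nat ->
  ambiguity L m xi e0 c = Cmul (Cconj (c (L - m)%nat)) (omega L (- (INR xi * INR (L - m)))).
Proof.
  intros Hm; unfold ambiguity; rewrite (Csum_single L _ (L - m)); [|lia|].
  - replace ((L - m + m) mod L)%nat with 0%nat
      by (replace (L - m + m)%nat with (0 + L)%nat by lia; rewrite mod_add_L, Nat.Div0.mod_0_l; auto).
    unfold e0, delta; simpl.
    generalize (Cconj (c (L - m)%nat)) (omega L (- (INR xi * INR (L - m)))); intros; Cring.
  - intros j Hj Hne; unfold e0, delta.
    destruct (Nat.eqb_spec ((j + m) mod L) 0); [exfalso; apply (mod_add_neq_0 L j m); auto|].
    rewrite !Cmul_0_l; auto.
Qed.

Lemma ambiguity_e0_e0 L m xi : (0 < m < L)%nat -> ambiguity L m xi e0 e0 = C0.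
Proof.
  intros Hm; rewrite ambiguity_e0_l by auto; unfold e0, delta.
  destruct (Nat.eqb_spec (L - m) 0); [lia|]; rewrite Cconj_0; apply Cmul_0_l.
Qed.

Lemma ambiguity_0_e0_l L xi c : (1 <= L)%nat -> ambiguity L 0 xi e0 c = Cconj (c 0%nat).
Proof.
  intros HL; unfold ambiguity; rewrite (Csum_single L _ 0); [|lia|].
  - rewrite omega_neg_0; simpl; rewrite Nat.Div0.mod_0_l; unfold e0, delta; simpl.
    generalize (Cconj (c 0%nat)); intros; Cring.
  - intros j Hj Hne; unfold e0, delta; rewrite Nat.add_0_r, Nat.mod_small by auto.
    destruct (Nat.eqb_spec j 0); [lia|]; rewrite !Cmul_0_l; auto.
Qed.

(** The coefficient of [t] in [ambiguity (c + t e0) (c + t e0)]. *)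
Definition polar_e0 (L m xi : nat) (c : cvec) : Defs.C :=
  Cadd (ambiguity L m xi c e0) (ambiguity L m xi e0 c).

Lemma polar_e0_vadd L m xi c t e :
  polar_e0 L m xi (vadd c t e) = Cadd (polar_e0 L m xi c) (Cscale t (polar_e0 L m xi e)).
Proof.
  unfold polar_e0; rewrite ambiguity_vadd_l, ambiguity_vadd_r.
  generalize (ambiguity L m xi c e0) (ambiguity L m xi e e0) (ambiguity L m xi e0 c) (ambiguity L m xi e0 e).
  unfold Cscale; intros; Cring.
Qed.

Lemma Cloc_lipschitz_ambiguity_diag L m xi : (1 <= L)%nat ->
  Cloc_lipschitz (coords (2 * L)) (fun x => ambiguity L m xi (vec_of_real x) (vec_of_real x)).
Proof. intros HL; apply Cloc_lipschitz_ambiguity; auto; apply Cloc_lipschitz_vec_of_real. Qed.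

Lemma Cloc_lipschitz_polar_e0 L m xi : (1 <= L)%nat ->
  Cloc_lipschitz (coords (2 * L)) (fun x => polar_e0 L m xi (vec_of_real x)).
Proof.
  intros HL; apply Cloc_lipschitz_add; apply Cloc_lipschitz_ambiguity;
    auto using Cloc_lipschitz_vec_of_real, Cloc_lipschitz_const.
Qed.

(** The terms linear in [x 0] cancel, leaving [x 0 * x 0]. *)
Lemma null_ambiguity_0_re L xi : (1 <= L)%nat ->
  lebesgue_null (2 * L) (fun x => fst (ambiguity L 0 xi (vec_of_real x) (vec_of_real x)) = 0).
Proof.
  intros HL; set (F x := fst (ambiguity L 0 xi (vec_of_real x) (vec_of_real x))).
  apply (null_zero_quadratic (2 * L) 0 F (fun x => F (upd x 0 0))); try lia.
  - apply loc_lipschitz_upd_off, (Cloc_lipschitz_ambiguity_diag L 0 xi HL).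
  - intros x; unfold F; pattern x at 1 2; rewrite <- (upd_same x 0).
    rewrite (vec_of_real_upd_re _ 0), ambiguity_vadd_diag, ambiguity_e0_r, !ambiguity_0_e0_l by lia.
    unfold e0, delta, vec_of_real, upd, Cadd, Cscale, Cconj; simpl; ring.
Qed.

(** [ambiguity e0 e0 = 0] kills the term [x 0 * x 0]; the slope [polar_e0] is then handled
    through the coordinate [k]. *)
Lemma null_ambiguity_proj L m xi u k e' : (1 <= L)%nat -> (0 < m < L)%nat ->
  (k < 2 * L)%nat -> k <> 0%nat ->
  (forall x t, vec_of_real (upd x k t) = vadd (vec_of_real (upd x k 0)) t e') ->
  Cdot u (polar_e0 L m xi e') <> 0 ->
  lebesgue_null (2 * L) (fun x => Cdot u (ambiguity L m xi (vec_of_real x) (vec_of_real x)) = 0).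
Proof.
  intros HL Hm Hk Hk0 Hvec Hslope.
  set (P x := Cdot u (polar_e0 L m xi (vec_of_real x))).
  assert (HP : loc_lipschitz (coords (2 * L)) P)
    by (apply loc_lipschitz_Cdot, Cloc_lipschitz_polar_e0; auto).
  apply (null_zero_affine (2 * L) 0 _
    (fun x => Cdot u (ambiguity L m xi (vec_of_real (upd x 0 0)) (vec_of_real (upd x 0 0))))
    (fun x => P (upd x 0 0))); try lia.
  - apply (loc_lipschitz_upd_off _ _ _ (fun x => Cdot u (ambiguity L m xi (vec_of_real x) (vec_of_real x)))).
    apply loc_lipschitz_Cdot, Cloc_lipschitz_ambiguity_diag; auto.
  - apply loc_lipschitz_upd_off; auto.
  - intros x; pattern x at 1 2; rewrite <- (upd_same x 0).
    rewrite (vec_of_real_upd_re _ 0), ambiguity_vadd_diag, ambiguity_e0_e0 by lia.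
    rewrite !Cdot_add, !Cdot_scale; unfold P, polar_e0, e0, Cdot, C0, upd; simpl; ring.
  - apply (null_zero_linear (2 * L) k _ (fun x => P (upd (upd x k 0) 0 0)) (Cdot u (polar_e0 L m xi e'))); auto; try lia.
    + apply (loc_lipschitz_weaken (fun j => (coords (2 * L) j /\ j <> 0%nat) /\ j <> k)).
      { intros j [[Hj _] Hjk]; split; auto. }
      apply (loc_lipschitz_upd _ k 0 (fun x => P (upd x 0 0))), loc_lipschitz_upd_off; auto.
    + intros x.
      assert (E1 : upd x 0 0 = upd (upd (upd x k 0) 0 0) k (x k)).
      { apply functional_extensionality; intros j; unfold upd.
        destruct (Nat.eqb_spec j k), (Nat.eqb_spec j 0), (Nat.eqb_spec k 0); subst; auto; lia. }
      assert (E2 : upd (upd (upd x k 0) 0 0) k 0 = upd (upd x k 0) 0 0).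
      { apply functional_extensionality; intros j; unfold upd.
        destruct (Nat.eqb_spec j k), (Nat.eqb_spec j 0); subst; auto. }
      unfold P; rewrite E1 at 1; rewrite Hvec, E2, polar_e0_vadd, Cdot_add, Cdot_scale; ring.
Qed.

Lemma null_ambiguity_root L m xi : (1 <= L)%nat -> (m < L)%nat ->
  lebesgue_null (2 * L) (fun x => ambiguity L m xi (vec_of_real x) (vec_of_real x) = C0).
Proof.
  intros HL Hm; destruct (Nat.eq_dec m 0) as [-> | Hm0].
  { apply null_subset with (1 := null_ambiguity_0_re L xi HL); intros x ->; auto. }
  (* the two slopes cannot both vanish *)
  assert (Hsum : Cdot (1, 0) (polar_e0 L m xi (delta m (1, 0)))
               + Cdot (0, 1) (polar_e0 L m xi (delta m (0, 1))) = 2).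
  { unfold polar_e0; rewrite !ambiguity_e0_r, !ambiguity_e0_l by lia.
    unfold delta; rewrite !Nat.eqb_refl; unfold Cdot.
    destruct (Nat.eqb (L - m) m); generalize (omega L (- (INR xi * INR (L - m)))); intros; Cring; lra. }
  destruct (Req_dec (Cdot (1, 0) (polar_e0 L m xi (delta m (1, 0)))) 0) as [Hre | Hre].
  - apply null_subset with (fun x => Cdot (0, 1) (ambiguity L m xi (vec_of_real x) (vec_of_real x)) = 0).
    + apply (null_ambiguity_proj L m xi _ (2 * m + 1) (delta m (0, 1))); try lia.
      * intros; apply vec_of_real_upd_im.
      * lra.
    + intros x ->; unfold Cdot, C0; simpl; ring.
  - apply null_subset with (fun x => Cdot (1, 0) (ambiguity L m xi (vec_of_real x) (vec_of_real x)) = 0).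
    + apply (null_ambiguity_proj L m xi _ (2 * m) (delta m (1, 0))); auto; try lia.
      intros; apply vec_of_real_upd_re.
    + intros x ->; unfold Cdot, C0; simpl; ring.
Qed.

Theorem mainTheorem8 (L : nat) (hL : (1 <= L)%nat) :
  lebesgue_null (2 * L) (fun x => ~ diag_permissible L (vec_of_real x)).
Proof.
  apply null_subset with (fun x => exists m xi,
    (m < L)%nat /\ (xi < L)%nat /\ ambiguity L m xi (vec_of_real x) (vec_of_real x) = C0).
  - apply (null_countable_union _ (fun m x => exists xi,
      (m < L)%nat /\ (xi < L)%nat /\ ambiguity L m xi (vec_of_real x) (vec_of_real x) = C0));
      [intros m | intros x [m H]; exists m; auto].
    apply (null_countable_union _ (fun xi x =>
      (m < L)%nat /\ (xi < L)%nat /\ ambiguity L m xi (vec_of_real x) (vec_of_real x) = C0));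
      [intros xi | intros x [xi H]; exists xi; auto].
    destruct (lt_dec m L).
    + apply null_subset with (1 := null_ambiguity_root L m xi hL l); tauto.
    + apply null_empty; [lia | intros x [H _]; lia].
  - intros x; apply ambiguity_root_of_not_diag_permissible; auto.
Qed.
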